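(* Let $X,Y,Z$ be finite sets, $T\subseteq X\times Y\times Z$, and let $A\subseteq X$, $B\subseteq Y$, $C\subseteq Z$ be independent random subsets such that each element of $X$ is included in $A$ with probability $\alpha$, independently of the other elements, each element of $Y$ is included in $B$ with probability $\beta$, independently, and each element of $Z$ is included in $C$ with probability $\gamma$, independently. Then $$\Pr[T\cap(A\times B\times C)=\emptyset]\le(1-\alpha)^{|\pi_X(T)|}+(1-\beta)^{\min_{x\in\pi_X(T)}|\pi_Y(T\cap(\{x\}\times Y\times Z))|}+(1-\gamma)^{\min_{(x,y)\in\pi_{XY}(T)}|\pi_Z(T\cap(\{x\}\times\{y\}\times Z))|},$$ where $\pi_X,\pi_Y,\pi_Z,\pi_{XY}$ denote the projections from $X\times Y\times Z$ onto $X$, $Y$, $Z$, $X\times Y$ respectively. *)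

From HB Require Import structures.
From mathcomp Require Import all_boot all_order all_algebra.
Set Implicit Arguments. Unset Strict Implicit. Unset Printing Implicit Defensive.
Import Order.TTheory GRing.Theory Num.Theory.
Local Open Scope ring_scope.

Definition bern_weight (R : ringType) (U : finType) (p : R) (A : {set U}) : R :=
  p ^+ #|A| * (1 - p) ^+ #|~: A|.

Definition prob_miss (R : ringType) (X Y Z : finType) (T : {set X * Y * Z})
    (alpha beta gamma : R) : R :=
  \sum_(A : {set X}) \sum_(B : {set Y}) \sum_(C : {set Z})
    bern_weight alpha A * bern_weight beta B * bern_weight gamma C *
    (T :&: setX (setX A B) C == set0)%:R.

Definition piX (X Y Z : finType) (T : {set X * Y * Z}) : {set X} :=
  [set t.1.1 | t in T].
Definition piXY (X Y Z : finType) (T : {set X * Y * Z}) : {set X * Y} :=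
  [set t.1 | t in T].
Definition sliceY (X Y Z : finType) (T : {set X * Y * Z}) (x : X) : {set Y} :=
  [set t.1.2 | t in T & t.1.1 == x].
Definition sliceZ (X Y Z : finType) (T : {set X * Y * Z}) (xy : X * Y) : {set Z} :=
  [set t.2 | t in T & t.1 == xy].

(* min over x ∈ π_X(T) of |sliceY x|; empty-minimum default #|Y| (only relevant
   when T = ∅, in which case the inequality holds for any default). *)
Definition minY (X Y Z : finType) (T : {set X * Y * Z}) : nat :=
  \big[minn/#|Y|]_(x in piX T) #|sliceY T x|.
Definition minZ (X Y Z : finType) (T : {set X * Y * Z}) : nat :=
  \big[minn/#|Z|]_(xy in piXY T) #|sliceZ T xy|.

From HB Require Import structures.
From mathcomp Require Import all_boot all_order all_algebra.
Set Implicit Arguments. Unset Strict Implicit. Unset Printing Implicit Defensive.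
Import Order.TTheory GRing.Theory Num.Theory.
Local Open Scope ring_scope.

(* A random subset of U avoids a fixed S ⊆ U with probability (1 - p)^|S|.
   Apply a union bound along a chain of witnesses: either A misses π_X(T);
   or A contains some x ∈ π_X(T) and B misses the slice of x; or B also
   contains some y in that slice and C misses the slice of (x, y).  Each of
   the last two events is bounded conditionally on the earlier coordinates,
   and the slice sizes are bounded below by the minima. *)

Section BernoulliMean.
Variables (R : comNzRingType) (U : finType).
Implicit Types (p c : R) (A S : {set U}) (f g : {set U} -> R).

Definition bern_mean p f : R := \sum_(A : {set U}) bern_weight p A * f A.

Lemma big_set_distr (F : U -> bool -> R) :
  \sum_(A : {set U}) \prod_(u : U) F u (u \in A) =
  \prod_(u : U) (F u true + F u false).
Proof.
under [RHS]eq_bigr do rewrite -big_bool.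
rewrite bigA_distr_bigA (reindex (fun A : {set U} => [ffun u => u \in A])) /=.
  by apply: eq_bigr => A _; apply: eq_bigr => u _; rewrite ffunE.
exists (fun f : {ffun U -> bool} => [set u | f u]) => [A _|f _].
  by apply/setP => u; rewrite inE ffunE.
by apply/ffunP => u; rewrite ffunE inE.
Qed.

Lemma bern_weightE p A :
  bern_weight p A = \prod_(u : U) (if u \in A then p else 1 - p).
Proof.
rewrite (bigID (mem A)) /= (eq_bigr (fun _ => p)) => [|u -> //].
rewrite [X in _ * X](eq_bigr (fun _ => 1 - p)) => [|u /negbTE -> //].
rewrite !prodr_const /bern_weight; congr (_ ^+ _ * _ ^+ _).
by apply: eq_card => u; rewrite inE.
Qed.

Lemma setI_eq0_prod A S :
  (A :&: S == set0)%:R = \prod_(u : U) (if (u \in A) && (u \in S) then 0 else 1) :> R.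
Proof.
have [AS0|/set0Pn[u]] := eqVneq.
  apply/esym/big1 => u _; case: ifP => // uAS.
  by have := in_set0 u; rewrite -AS0 inE uAS.
by rewrite inE => uAS; rewrite (bigD1 u) //= uAS mul0r.
Qed.

Lemma bern_mean_setI_eq0 p S :
  bern_mean p (fun A => (A :&: S == set0)%:R) = (1 - p) ^+ #|S|.
Proof.
rewrite /bern_mean; under eq_bigr do rewrite bern_weightE setI_eq0_prod -big_split /=.
rewrite (big_set_distr (fun u b =>
  (if b then p else 1 - p) * (if b && (u \in S) then 0 else 1))) /=.
rewrite -prodr_const [RHS]big_mkcond; apply: eq_bigr => u _.
by case: (u \in S); rewrite ?mulr0 ?mulr1 ?add0r // addrC subrK.
Qed.

Lemma bern_mean_cst p c : bern_mean p (fun => c) = c.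
Proof.
have := bern_mean_setI_eq0 p set0; rewrite cards0 expr0 /bern_mean.
under eq_bigr do rewrite setI0 eqxx mulr1.
by rewrite -big_distrl /= => ->; rewrite mul1r.
Qed.

Lemma bern_meanD p f g :
  bern_mean p (fun A => f A + g A) = bern_mean p f + bern_mean p g.
Proof. by rewrite -big_split; apply: eq_bigr => A _; rewrite mulrDr. Qed.

End BernoulliMean.

Section BernoulliMeanBounds.
Variables (R : numDomainType) (U : finType) (p : R).
Hypotheses (p_ge0 : 0 <= p) (p_le1 : p <= 1).
Implicit Types (c : R) (S : {set U}) (f g : {set U} -> R).

Lemma bern_weight_ge0 (A : {set U}) : 0 <= bern_weight p A.
Proof. by rewrite mulr_ge0 // exprn_ge0 // subr_ge0. Qed.

Lemma ler_bern_mean f g :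
  (forall A, f A <= g A) -> bern_mean p f <= bern_mean p g.
Proof. by move=> fg; apply: ler_sum => A _; rewrite ler_wpM2l ?bern_weight_ge0. Qed.

Lemma bern_mean_le_cst f c : (forall A, f A <= c) -> bern_mean p f <= c.
Proof. by move=> fc; rewrite -(bern_mean_cst U p c); apply: ler_bern_mean. Qed.

Lemma bern_mean_union_bound S f c :
  0 <= c -> (forall A, f A <= 1) -> (forall A u, u \in A :&: S -> f A <= c) ->
  bern_mean p f <= (1 - p) ^+ #|S| + c.
Proof.
move=> c_ge0 f_le1 f_meet; rewrite -bern_mean_setI_eq0 -(bern_mean_cst U p c).
rewrite -bern_meanD; apply: ler_bern_mean => A /=.
case: eqP => [_|/eqP/set0Pn[u /f_meet]]; last by rewrite add0r.
by apply: le_trans (f_le1 A) _; rewrite lerDl.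
Qed.

End BernoulliMeanBounds.

Section Slices.
Variables (X Y Z : finType) (T : {set X * Y * Z}).

Lemma sliceY_piXY x y : y \in sliceY T x -> (x, y) \in piXY T.
Proof.
case/imsetP=> t; rewrite inE => /andP[tT /eqP tx] ->.
by apply/imsetP; exists t => //; case: t tT tx => [[? ?] ?] /= _ ->.
Qed.

Lemma minY_le x : x \in piX T -> (minY T <= #|sliceY T x|)%N.
Proof. by move=> xT; apply: (bigmin_le_cond #|Y| (fun i => #|sliceY T i|) xT). Qed.

Lemma minZ_le xy : xy \in piXY T -> (minZ T <= #|sliceZ T xy|)%N.
Proof. by move=> xyT; apply: (bigmin_le_cond #|Z| (fun i => #|sliceZ T i|) xyT). Qed.

End Slices.

Section BoxMiss.
Variables (R : numDomainType) (X Y Z : finType) (T : {set X * Y * Z}).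
Implicit Types (A : {set X}) (B : {set Y}) (C : {set Z}).

Definition box_miss A B C : R := (T :&: setX (setX A B) C == set0)%:R.

Lemma prob_missE (alpha beta gamma : R) :
  prob_miss T alpha beta gamma =
  bern_mean alpha (fun A => bern_mean beta (fun B => bern_mean gamma (box_miss A B))).
Proof.
apply: eq_bigr => A _; rewrite big_distrr; apply: eq_bigr => B _ /=.
by rewrite !big_distrr; apply: eq_bigr => C _ /=; rewrite !mulrA.
Qed.

Lemma box_miss_le1 A B C : box_miss A B C <= 1.
Proof. by rewrite /box_miss lern1 leq_b1. Qed.

Lemma box_miss_sliceZ A B C x y z :
  x \in A -> y \in B -> z \in C :&: sliceZ T (x, y) -> box_miss A B C = 0.
Proof.
move=> xA yB /setIP[zC /imsetP[t]]; rewrite inE => /andP[tT /eqP txy] tz.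
suff /negbTE TABC : T :&: setX (setX A B) C != set0 by rewrite /box_miss TABC.
by apply/set0Pn; exists t; rewrite !inE tT txy /= xA yB -tz zC.
Qed.

Variables (beta gamma : R).
Hypotheses (beta_ge0 : 0 <= beta) (beta_le1 : beta <= 1).
Hypotheses (gamma_ge0 : 0 <= gamma) (gamma_le1 : gamma <= 1).

Lemma bern_mean_box_miss_le A B x y :
  x \in A -> y \in B :&: sliceY T x ->
  bern_mean gamma (box_miss A B) <= (1 - gamma) ^+ minZ T.
Proof.
move=> xA /setIP[yB yx].
apply: (@le_trans _ _ ((1 - gamma) ^+ #|sliceZ T (x, y)| + 0)).
  apply: bern_mean_union_bound => // [C|C z zCS]; first exact: box_miss_le1.
  by rewrite (box_miss_sliceZ xA yB zCS).
by rewrite addr0 ler_wiXn2l ?subr_ge0 ?gerBl // minZ_le // sliceY_piXY.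
Qed.

Lemma bern_mean2_box_miss_le A x :
  x \in A :&: piX T ->
  bern_mean beta (fun B => bern_mean gamma (box_miss A B)) <=
    (1 - beta) ^+ minY T + (1 - gamma) ^+ minZ T.
Proof.
move=> /setIP[xA xT].
apply: (@le_trans _ _ ((1 - beta) ^+ #|sliceY T x| + (1 - gamma) ^+ minZ T)).
  apply: bern_mean_union_bound => // [|B|B y yBS].
  - by rewrite exprn_ge0 // subr_ge0.
  - by apply: bern_mean_le_cst => // C; apply: box_miss_le1.
  - exact: bern_mean_box_miss_le yBS.
by rewrite lerD2r ler_wiXn2l ?subr_ge0 ?gerBl // minY_le.
Qed.

End BoxMiss.

Theorem lemma4p5 (R : realFieldType) (X Y Z : finType) (T : {set X * Y * Z})
    (alpha beta gamma : R)
    (ha0 : 0 <= alpha) (ha1 : alpha <= 1)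
    (hb0 : 0 <= beta) (hb1 : beta <= 1)
    (hc0 : 0 <= gamma) (hc1 : gamma <= 1) :
  prob_miss T alpha beta gamma <=
    (1 - alpha) ^+ #|piX T| + (1 - beta) ^+ minY T + (1 - gamma) ^+ minZ T.
Proof.
rewrite prob_missE -addrA; apply: bern_mean_union_bound => // [|A|A x].
- by rewrite addr_ge0 // exprn_ge0 // subr_ge0.
- by do 2![apply: bern_mean_le_cst => // ?]; apply: box_miss_le1.
- exact: bern_mean2_box_miss_le.
Qed.
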